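(* Let $V$ be a nonzero finite-dimensional complex vector space with a norm $\lVert\cdot\rVert$. Let $x,y\in\mathrm U(V)$ be such that the subgroup of $\mathrm{GL}(V)$ generated by $x$ and $y$ is finite, and suppose $\lVert \mathrm{id}_V-x\rVert_{\mathrm{op}}<1/2$ and $\lVert \mathrm{id}_V-y\rVert_{\mathrm{op}}<1/2$. Then $xy=yx$.
   Context: $\mathrm U(V)$ denotes the group of linear isometries of $V$, i.e. the set of $x\in\mathrm{GL}(V)$ with $\lVert xv\rVert=\lVert v\rVert$ for all $v\in V$. For $a\in\mathrm{End}(V)$, the operator norm is $\lVert a\rVert_{\mathrm{op}}=\max\{\lVert av\rVert : v\in V,\ \lVert v\rVert=1\}$. *)

From HB Require Import structures.
From mathcomp Require Import all_boot all_order all_algebra.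
From mathcomp Require Import all_classical all_reals.
From mathcomp.real_closed Require Import complex.
Set Implicit Arguments. Unset Strict Implicit. Unset Printing Implicit Defensive.
Import Order.TTheory GRing.Theory Num.Theory.
Local Open Scope ring_scope.
Local Open Scope classical_set_scope.

(* V = C^n (column vectors), C = R[i] with R : realType.  Matrices act on the left. *)

Definition is_norm (R : realType) (n : nat) (N : 'cV[R[i]]_n -> R) : Prop :=
  [/\ forall v, 0 <= N v,
      forall v, N v = 0 -> v = 0,
      forall (c : R[i]) v, N (c *: v) = ComplexField.Normc.normc c * N v
    & forall v w, N (v + w) <= N v + N w].

Definition opnorm (R : realType) (n : nat) (N : 'cV[R[i]]_n -> R)
  (a : 'M[R[i]]_n) : R :=
  sup [set N (a *m v) | v in [set v | N v = 1]].

Definition isometry_mx (R : realType) (n : nat) (N : 'cV[R[i]]_n -> R)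
  (x : 'M[R[i]]_n) : Prop :=
  x \in unitmx /\ forall v, N (x *m v) = N v.

Inductive gen2 (R : realType) (n : nat) (x y : 'M[R[i]]_n) : 'M[R[i]]_n -> Prop :=
  | gen2_1 : gen2 x y 1%:M
  | gen2_x : gen2 x y x
  | gen2_y : gen2 x y y
  | gen2_mul a b : gen2 x y a -> gen2 x y b -> gen2 x y (a *m b)
  | gen2_inv a : gen2 x y a -> gen2 x y (invmx a).

Definition gen2_set (R : realType) (n : nat) (x y : 'M[R[i]]_n) : set 'M[R[i]]_n :=
  [set a | gen2 x y a].

(* Write d(h) = |1 - h| for the operator norm.  Since
     1 - x g x^-1 g^-1 = ((1 - g)(1 - x) - (1 - x)(1 - g)) x^-1 g^-1,
   the commutator c of two isometries x, g satisfies d(c) <= 2 d(x) d(g), which is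
   < d(g) when d(x) < 1/2.  Inducting on d over the finite group <x, y>, we may thus
   assume that x commutes with c, i.e. x g x^-1 = c g with x c = c x.  As x and c have
   finite order M, V is spanned by the joint eigenspaces of x and c, cut out by the
   averaging projectors M^-1 sum_k q^-k u^k, whose norms are at most 1 because x and c
   are isometries.  If u lies in the joint (p, q)-eigenspace with q <> 1, then
   x (g u) = p c (g u) forces the (p, q)-component of g u to vanish, so u is the
   (p, q)-component of (1 - g) u and |u| <= d(g) |u|, whence u = 0.  Therefore c = 1,
   i.e. x g = g x; taking g = y gives the theorem. *)

From HB Require Import structures.
From mathcomp Require Import all_boot all_order all_algebra all_field.
From mathcomp Require Import cyclic.
From mathcomp Require Import all_classical all_reals.
From mathcomp.real_closed Require Import complex.
From mathcomp Require Import lra.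
Set Implicit Arguments.
Unset Strict Implicit.
Unset Printing Implicit Defensive.

Import Order.TTheory GRing.Theory Num.Theory.
Local Open Scope ring_scope.
Local Open Scope classical_set_scope.
Local Notation normc := ComplexField.Normc.normc.
Local Notation defect N h := (opnorm N (1%:M - h)).

Section ComplexModulus.
Variable R : realType.
Implicit Types c : R[i].

Lemma normc_ge0 c : 0 <= normc c.
Proof. by case: c => a b; rewrite /= sqrtr_ge0. Qed.

Lemma ger0_normc (r : R) : 0 <= r -> normc r%:C%C = r.
Proof. by move=> r0; rewrite /= expr0n /= addr0 sqrtr_sqr ger0_norm. Qed.

Lemma normcX c k : normc (c ^+ k) = normc c ^+ k.
Proof.
elim: k => [|k IH]; first by rewrite !expr0 ComplexField.Normc.normc1.
by rewrite !exprS ComplexField.Normc.normcM IH.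
Qed.

Lemma normc_unity_root M c : (0 < M)%N -> c ^+ M = 1 -> normc c = 1.
Proof.
move=> M_gt0 /(congr1 (@ComplexField.Normc.normc R)).
rewrite normcX ComplexField.Normc.normc1 => /eqP.
by rewrite pexpr_eq1 ?normc_ge0 -?lt0n // => /eqP.
Qed.

End ComplexModulus.

Section Isometries.
Variables (R : realType) (n : nat) (N : 'cV[R[i]]_n.+1 -> R).
Implicit Types (x y a b : 'M[R[i]]_n.+1).

Lemma isometry_mx1 : isometry_mx N 1%:M.
Proof. by split=> [|v]; rewrite ?unitmx1 ?mul1mx. Qed.

Lemma isometry_mxM a b : isometry_mx N a -> isometry_mx N b -> isometry_mx N (a *m b).
Proof.
move=> [a_unit Na] [b_unit Nb]; split=> [|v]; first by rewrite unitmx_mul a_unit.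
by rewrite -mulmxA Na Nb.
Qed.

Lemma isometry_mxV a : isometry_mx N a -> isometry_mx N (invmx a).
Proof. by move=> [a_unit Na]; split=> [|v]; rewrite ?unitmx_inv // -Na mulKVmx. Qed.

Lemma isometry_mxX a k : isometry_mx N a -> isometry_mx N (a ^+ k).
Proof.
move=> isoa; elim: k => [|k IH]; first exact: isometry_mx1.
by rewrite exprS; apply: isometry_mxM.
Qed.

Lemma gen2_isometry x y a :
  isometry_mx N x -> isometry_mx N y -> gen2 x y a -> isometry_mx N a.
Proof.
move=> isox isoy; elim=> // [|a' b _ isoa' _ isob|a' _ isoa'].
- exact: isometry_mx1.
- exact: isometry_mxM.
- exact: isometry_mxV.
Qed.

End Isometries.

Lemma commutator_one_sub (T : pzRingType) (a b : T) :
  a * b - b * a = (1 - a) * (1 - b) - (1 - b) * (1 - a).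
Proof.
have expand u w : (1 - u) * (1 - w) = 1 - w - u + u * w :> T.
  by rewrite mulrBl mul1r mulrBr mulr1 opprB addrA addrAC.
by rewrite !expand [1 - a - b]addrAC opprD addrACA subrr add0r.
Qed.

Lemma one_sub_commutator (T : unitRingType) (x g : T) :
  x \is a GRing.unit -> g \is a GRing.unit ->
  1 - x * g * x^-1 * g^-1 = ((1 - g) * (1 - x) - (1 - x) * (1 - g)) * (x^-1 * g^-1).
Proof.
by move=> x_unit g_unit; rewrite -commutator_one_sub mulrBl !mulrA mulrK // divrr.
Qed.

Lemma commutator_mulK (T : unitRingType) (x g : T) :
  x \is a GRing.unit -> g \is a GRing.unit -> x * g * x^-1 * g^-1 * g * x = x * g.
Proof. by move=> x_unit g_unit; rewrite !mulrVK. Qed.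

Lemma mulmxA_mul (T : pzRingType) n m (A B : 'M[T]_n.+1) (C : 'M[T]_(n.+1, m)) :
  A *m (B *m C) = (A * B) *m C.
Proof. exact: mulmxA. Qed.

Lemma mulmx_cV_ext (T : pzRingType) m n (A B : 'M[T]_(m, n)) :
  (forall v : 'cV_n, A *m v = B *m v) -> A = B.
Proof.
move=> eqAB; apply/matrixP => i j; move: (eqAB (delta_mx j 0)).
by rewrite -!colE => /matrixP /(_ i 0); rewrite !mxE.
Qed.

Section Norms.
Variables (R : realType) (n : nat) (N : 'cV[R[i]]_n.+1 -> R).
Hypothesis N_is_norm : is_norm N.
Implicit Types (v : 'cV[R[i]]_n.+1) (a h : 'M[R[i]]_n.+1).

Lemma norm_ge0 v : 0 <= N v. Proof. by case: N_is_norm. Qed.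

Lemma normZ c v : N (c *: v) = normc c * N v. Proof. by case: N_is_norm. Qed.

Lemma norm_triangle v w : N (v + w) <= N v + N w. Proof. by case: N_is_norm. Qed.

Lemma norm0 : N 0 = 0.
Proof. by rewrite -(scale0r (0 : 'cV_n.+1)) normZ ComplexField.Normc.normc0 mul0r. Qed.

Lemma normN v : N (- v) = N v.
Proof. by rewrite -scaleN1r normZ normcN ComplexField.Normc.normc1 mul1r. Qed.

Lemma norm_le0 v : N v <= 0 -> v = 0.
Proof.
by case: N_is_norm => _ N_eq0 _ _ Nv_le0; apply: N_eq0; apply/eqP; rewrite eq_le Nv_le0 norm_ge0.
Qed.

Lemma norm_sum_le k (f : 'I_k -> 'cV[R[i]]_n.+1) :
  N (\sum_(i < k) f i) <= \sum_(i < k) N (f i).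
Proof.
elim/big_rec2: _ => [|i y1 y2 _ IH]; first by rewrite norm0.
by apply: le_trans (norm_triangle _ _) _; rewrite lerD2l.
Qed.

Lemma norm_normalize v : N v != 0 -> N (((N v)^-1)%:C%C *: v) = 1.
Proof. by move=> Nv_neq0; rewrite normZ ger0_normc ?invr_ge0 ?norm_ge0 // mulVf. Qed.

Lemma exists_norm1 : exists v, N v = 1.
Proof.
pose e : 'cV[R[i]]_n.+1 := delta_mx 0 0.
suff /norm_normalize : N e != 0 by exists (((N e)^-1)%:C%C *: e).
apply/eqP => /eqP; rewrite eq_le norm_ge0 andbT => /norm_le0 /matrixP /(_ 0 0).
by rewrite !mxE /= => /eqP; rewrite oner_eq0.
Qed.

Section OperatorNorm.
Variables (a : 'M[R[i]]_n.+1) (K : R).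
Hypothesis normM_le : forall v, N v = 1 -> N (a *m v) <= K.

Lemma opnorm_le : opnorm N a <= K.
Proof.
apply: ge_sup => [|_ [v Nv1 <-]]; last exact: normM_le.
by have [v Nv1] := exists_norm1; exists (N (a *m v)), v.
Qed.

Lemma normM_le_opnorm v : N (a *m v) <= opnorm N a * N v.
Proof.
have [Nv0|Nv_neq0] := eqVneq (N v) 0.
  by rewrite [v]norm_le0 ?Nv0 // mulmx0 norm0 mulr0.
have Nv_gt0 : 0 < N v by rewrite lt_def Nv_neq0 norm_ge0.
have ub : has_ubound [set N (a *m w) | w in [set w | N w = 1]].
  by exists K => _ [w /normM_le + <-].
have := ub_le_sup ub (ex_intro2 _ _ _ (norm_normalize Nv_neq0) erefl).
rewrite -scalemxAr normZ ger0_normc ?invr_ge0 ?norm_ge0 //.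
by rewrite -(ler_pM2r Nv_gt0) mulrAC mulVf // mul1r.
Qed.

Lemma opnorm_ge0 : 0 <= opnorm N a.
Proof.
have [v Nv1] := exists_norm1.
by rewrite -[opnorm _ _]mulr1 -Nv1; apply: le_trans (normM_le_opnorm v); apply: norm_ge0.
Qed.

End OperatorNorm.

Section Defect.
Variable h : 'M[R[i]]_n.+1.
Hypothesis isoh : isometry_mx N h.

Lemma norm_one_sub_le2 v : N v = 1 -> N ((1%:M - h) *m v) <= 2.
Proof.
move=> Nv1; rewrite mulmxBl mul1mx; apply: le_trans (norm_triangle _ _) _.
by rewrite normN isoh.2 Nv1.
Qed.

Lemma norm_one_sub_le_defect v : N ((1%:M - h) *m v) <= defect N h * N v.
Proof. exact: normM_le_opnorm norm_one_sub_le2 v. Qed.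

Lemma defect_ge0 : 0 <= defect N h.
Proof. exact: opnorm_ge0 norm_one_sub_le2. Qed.

Lemma defect_eq0 : defect N h = 0 -> h = 1%:M.
Proof.
move=> dh0; apply/esym/subr0_eq/mulmx_cV_ext => v; rewrite mul0mx.
by apply: norm_le0; rewrite (le_trans (norm_one_sub_le_defect v)) // dh0 mul0r.
Qed.

End Defect.

Lemma defect_commutator_le x g : isometry_mx N x -> isometry_mx N g ->
  defect N (x *m g *m invmx x *m invmx g) <= 2 * (defect N x * defect N g).
Proof.
move=> isox isog; apply: opnorm_le => v Nv1.
have [[x_unit _] [g_unit _]] := (isox, isog).
pose u := invmx x *m (invmx g *m v).
have Nu1 : N u = 1 by rewrite /u (isometry_mxV isox).2 (isometry_mxV isog).2.
have -> : (1%:M - x *m g *m invmx x *m invmx g) *m v =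
    (1%:M - g) *m ((1%:M - x) *m u) - (1%:M - x) *m ((1%:M - g) *m u).
  rewrite (one_sub_commutator x_unit g_unit) -mulmxE /u !mulmxA -mulmxBl.
  by congr (_ *m _); rewrite !mulmxBl.
have le_defectM a b : isometry_mx N a -> isometry_mx N b ->
    N ((1%:M - a) *m ((1%:M - b) *m u)) <= defect N a * defect N b.
  move=> isoa isob; apply: le_trans (norm_one_sub_le_defect isoa _) _.
  by rewrite ler_wpM2l ?defect_ge0 // -[defect N b]mulr1 -Nu1 norm_one_sub_le_defect.
apply: le_trans (norm_triangle _ _) _; rewrite normN mulr_natl mulr2n.
by apply: lerD; first rewrite mulrC; apply: le_defectM.
Qed.

Lemma defect_commutator_lt x g : isometry_mx N x -> isometry_mx N g ->
  defect N x < 1 / 2 -> defect N g != 0 ->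
  defect N (x *m g *m invmx x *m invmx g) < defect N g.
Proof.
move=> isox isog dx dg_neq0; have dg_gt0 : 0 < defect N g by rewrite lt_def dg_neq0 defect_ge0.
apply: le_lt_trans (defect_commutator_le isox isog) _.
by rewrite mulrA gtr_pMl //; lra.
Qed.

End Norms.

Lemma finite_powers_order (T : unitRingType) (a : T) :
  a \is a GRing.unit -> finite_set (range (GRing.exp a)) ->
  exists2 M, (0 < M)%N & a ^+ M = 1.
Proof.
move=> a_unit fin_pow; apply: contrapT => no_order.
have inj_pow : injective (GRing.exp a).
  move=> i j; wlog le_ij : i j / (i <= j)%N => [hw eq_ij|eq_ij].
    by case/orP: (leq_total i j) => /hw; [apply | move=> /(_ (esym eq_ij))].
  apply/eqP; rewrite eqn_leq le_ij leqNgt; apply/negP => lt_ij; apply: no_order.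
  exists (j - i)%N; first by rewrite subn_gt0.
  by apply: (mulrI (unitrX i a_unit)); rewrite -exprD subnKC // mulr1.
apply: infinite_nat.
by rewrite -(eq_finite_set (@inj_card_eq _ _ setT _ (in2W inj_pow))).
Qed.

Lemma gen2X (R : realType) n (x y a : 'M[R[i]]_n.+1) k :
  gen2 x y a -> gen2 x y (a ^+ k).
Proof.
move=> gen_a; elim: k => [|k IH]; first exact: gen2_1.
by rewrite exprS; apply: gen2_mul.
Qed.

Lemma gen2_order (R : realType) n (x y a : 'M[R[i]]_n.+1) :
  finite_set (gen2_set x y) -> gen2 x y a -> a \in unitmx ->
  exists2 M, (0 < M)%N & a ^+ M = 1.
Proof.
move=> fin_gen gen_a a_unit; apply: finite_powers_order => //.
by apply: sub_finite_set fin_gen => _ [k _ <-]; apply: gen2X.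
Qed.

Lemma count_lt_subpred (T : eqType) (a b : pred T) (s : seq T) x :
  subpred a b -> x \in s -> b x -> ~~ a x -> (count a s < count b s)%N.
Proof.
move=> sub_ab s_x bx nax.
have -> : count b s = (count a s + count (predD b a) s)%N.
  rewrite -count_predUI (@eq_count _ (predI _ _) pred0) ?count_pred0 ?addn0 => [|y].
    by apply: eq_count => y /=; case: (boolP (a y)) => [/sub_ab ->|].
  by rewrite /= andbA andbN.
by rewrite -ltn_subLR ?subnn // -has_count; apply/hasP; exists x => //=; rewrite nax.
Qed.

Lemma finite_set_ltr_ind (T : eqType) (R : realType) (S : set T) (f : T -> R)
    (P : T -> Prop) : finite_set S ->
  (forall g, S g -> (forall h, S h -> f h < f g -> P h) -> P g) ->
  forall g, S g -> P g.
Proof.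
move=> /finite_seqP[X ->] step.
suff ind k g : (count (fun h => (f h < f g)%R) X < k)%N -> g \in X -> P g.
  by move=> g; apply: ind.
elim: k g => // k IH g count_lt gX; apply: step => // h hX lt_hg.
apply: IH (hX); rewrite -ltnS; apply: leq_trans count_lt.
apply: (count_lt_subpred (x := h)) => //= [h' lt_h'h|]; last by rewrite ltxx.
exact: lt_trans lt_h'h lt_hg.
Qed.

Lemma prim_root_exists (F : numClosedFieldType) M :
  (0 < M)%N -> exists w : F, M.-primitive_root w.
Proof.
move=> M_gt0; have [r Dp] := closed_field_poly_normal ('X^M - 1 : {poly F}).
rewrite (monicP _) ?monicXnsubC // scale1r in Dp.
have r_roots : all M.-unity_root r by apply/allP => z; rewrite -root_prod_XsubC -Dp.
have size_r : (M < (size r).+1)%N by rewrite -(size_prod_XsubC r id) -Dp size_XnsubC.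
have [|w] := hasP (has_prim_root M_gt0 r_roots _ size_r); last by exists w.
by rewrite -separable_prod_XsubC -Dp separable_Xn_sub_1 // pnatr_eq0 -lt0n.
Qed.

Lemma prim_root_expr_eq1 (F : idomainType) M (w : F) (l : 'I_M) :
  M.-primitive_root w -> (w ^+ l == 1) = (l == 0 :> nat).
Proof. by move=> prim_w; rewrite -(expr0 w) (eq_prim_root_expr prim_w) mod0n modn_small. Qed.

Lemma prim_root_exprX_order (F : idomainType) M (w : F) j :
  M.-primitive_root w -> (w ^+ j) ^+ M = 1.
Proof. by move=> prim_w; rewrite exprAC (prim_expr_order prim_w) expr1n. Qed.

Lemma unity_root_neq0 (F : fieldType) M (c : F) : (0 < M)%N -> c ^+ M = 1 -> c != 0.
Proof. by move=> M_gt0 cM; rewrite -unitfE -(unitrX_pos _ M_gt0) cM unitr1. Qed.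

Lemma geom_sum_eq0 (F : idomainType) (q : F) M :
  q ^+ M = 1 -> q != 1 -> \sum_(k < M) q ^+ k = 0.
Proof.
move=> qM q_neq1; apply/eqP; have /eqP := subrX1 q M.
by rewrite qM subrr eq_sym mulf_eq0 subr_eq0 (negPf q_neq1).
Qed.

Lemma sum_shift_periodic (V : zmodType) M (f : nat -> V) :
  f M = f 0%N -> \sum_(k < M) f k.+1 = \sum_(k < M) f k.
Proof.
move=> fM; have sumSl : \sum_(k < M.+1) f k = f 0%N + \sum_(k < M) f k.+1 := big_ord_recl _ _.
have sumSr : \sum_(k < M.+1) f k = \sum_(k < M) f k + f M := big_ord_recr _ _.
by apply: (addIr (f 0%N)); rewrite addrC -sumSl sumSr fM.
Qed.

HB.lock Definition eigenproj (F : fieldType) n M (u : 'M[F]_n.+1) (q : F) : 'M[F]_n.+1 :=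
  (M%:R)^-1 *: \sum_(k < M) q ^- k *: u ^+ k.

Section EigenProjector.
Variables (F : numFieldType) (n M : nat) (u : 'M[F]_n.+1).
Hypothesis M_gt0 : (0 < M)%N.

Lemma eigenproj_comm a q : GRing.comm a u -> GRing.comm a (eigenproj M u q).
Proof.
move=> au; rewrite /GRing.comm eigenproj.unlock -scalerAr -scalerAl mulr_sumr mulr_suml.
by congr (_ *: _); apply: eq_bigr => k _; rewrite -scalerAr -scalerAl (commrX k au).
Qed.

Lemma mul_eigenproj q : u ^+ M = 1 -> q ^+ M = 1 -> u * eigenproj M u q = q *: eigenproj M u q.
Proof.
move=> uM qM; have q_unit : q \is a GRing.unit.
  by rewrite unitfE (unity_root_neq0 M_gt0 qM).
rewrite eigenproj.unlock -scalerAr scalerA mulrC -scalerA; congr (_ *: _).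
rewrite mulr_sumr scaler_sumr -(@sum_shift_periodic _ M (fun k => q *: (q ^- k *: u ^+ k))) /=.
  apply: eq_bigr => k _; rewrite scalerA [q ^+ k.+1]exprSr invrM ?unitrX //.
  by rewrite mulrA mulrV // mul1r -scalerAr -exprS.
by rewrite uM qM invr1 !expr0 scale1r.
Qed.

Lemma eigenproj_eigenvector q (v : 'cV[F]_n.+1) :
  q != 0 -> u *m v = q *: v -> eigenproj M u q *m v = v.
Proof.
move=> q_neq0 uv; have uXv k : u ^+ k *m v = q ^+ k *: v.
  elim: k => [|k IH]; first by rewrite !expr0 -idmxE mul1mx scale1r.
  by rewrite exprSr -mulmxE -mulmxA uv -scalemxAr IH scalerA -exprS.
rewrite eigenproj.unlock -scalemxAl mulmx_suml.
under eq_bigr => k _ do rewrite -scalemxAl uXv scalerA mulVf ?expf_neq0 // scale1r.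
by rewrite sumr_const card_ord -scaler_nat scalerA mulVf ?scale1r // pnatr_eq0 -lt0n.
Qed.

Lemma eigenproj_fixed q (v : 'cV[F]_n.+1) :
  q ^+ M = 1 -> q != 1 -> u *m v = v -> eigenproj M u q *m v = 0.
Proof.
move=> qM q_neq1 uv; have uXv k : u ^+ k *m v = v.
  elim: k => [|k IH]; first by rewrite expr0 -idmxE mul1mx.
  by rewrite exprSr -mulmxE -mulmxA uv IH.
rewrite eigenproj.unlock -scalemxAl mulmx_suml.
under eq_bigr => k _ do rewrite -scalemxAl uXv -exprVn.
by rewrite -scaler_suml geom_sum_eq0 ?scale0r ?scaler0 ?invr_eq1 // exprVn qM invr1.
Qed.

Lemma sum_eigenproj w : M.-primitive_root w -> \sum_(j < M) eigenproj M u (w ^+ j) = 1.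
Proof.
move=> prim_w; rewrite eigenproj.unlock -scaler_sumr exchange_big /=.
have inner (k : 'I_M) :
    \sum_(j < M) (w ^+ j) ^- k *: u ^+ k = (if k == 0 :> nat then M%:R else 0) *: u ^+ k.
  rewrite -scaler_suml; congr (_ *: _).
  under eq_bigr => j _ do rewrite -exprM mulnC exprM -exprVn.
  case: eqP => [->|k_neq0].
    by under eq_bigr do rewrite expr0 invr1 expr1n; rewrite sumr_const card_ord.
  apply: geom_sum_eq0; first by rewrite exprVn prim_root_exprX_order // invr1.
  by rewrite invr_eq1 (prim_root_expr_eq1 _ prim_w); apply/eqP.
under eq_bigr => k _ do rewrite inner.
case: M M_gt0 prim_w inner => // m _ _ _.
rewrite big_ord_recl /= big1 => [|k _]; last by rewrite scale0r.
by rewrite addr0 expr0 scalerA mulVf ?scale1r ?pnatr_eq0.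
Qed.

End EigenProjector.

Section CommutingEigenProjectors.
Variables (F : numFieldType) (n M : nat) (a b : 'M[F]_n.+1).
Hypotheses (M_gt0 : (0 < M)%N) (aM : a ^+ M = 1) (ab : GRing.comm a b).

Lemma mul_eigenproj_comm p q : p ^+ M = 1 ->
  a * (eigenproj M b q * eigenproj M a p) = p *: (eigenproj M b q * eigenproj M a p).
Proof.
move=> pM; have aP : GRing.comm a (eigenproj M b q) by apply: eigenproj_comm.
by rewrite mulrA aP -mulrA mul_eigenproj // scalerAr.
Qed.

End CommutingEigenProjectors.

Section TwistedCommutationAlgebra.
Variables (F : numFieldType) (n M : nat) (x z g : 'M[F]_n.+1).
Hypotheses (M_gt0 : (0 < M)%N) (xM : x ^+ M = 1).
Hypotheses (xz : GRing.comm x z) (xg : x * g = z * g * x).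

Lemma eigenproj_twist_eq0 p q (u : 'cV[F]_n.+1) :
  p ^+ M = 1 -> q ^+ M = 1 -> q != 1 -> x *m u = p *: u ->
  eigenproj M z q *m (eigenproj M x p *m (g *m u)) = 0.
Proof.
move=> pM qM q_neq1 xu; apply: eigenproj_fixed => //.
have xgu : x *m (g *m u) = p *: (z *m (g *m u)).
  by rewrite mulmxA_mul xg -2!mulmxA_mul xu -2!scalemxAr.
move: (g *m u) xgu => t xt; apply: (scalerI (unity_root_neq0 M_gt0 pM)).
have xE : GRing.comm x (eigenproj M x p) by apply: eigenproj_comm; apply: commr_refl.
have zE : GRing.comm z (eigenproj M x p) by apply: eigenproj_comm; apply/esym.
apply: esym; rewrite scalemxAl -(mul_eigenproj M_gt0 xM pM) xE -mulmxA_mul xt.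
by rewrite -scalemxAr mulmxA_mul -zE -mulmxA_mul.
Qed.

End TwistedCommutationAlgebra.

Section TwistedCommutation.
Variables (R : realType) (n : nat) (N : 'cV[R[i]]_n.+1 -> R).
Hypothesis N_is_norm : is_norm N.

Lemma norm_eigenproj_le M (u : 'M[R[i]]_n.+1) q v :
  (0 < M)%N -> isometry_mx N u -> normc q = 1 -> N (eigenproj M u q *m v) <= N v.
Proof.
move=> M_gt0 isou q1; rewrite eigenproj.unlock -scalemxAl (normZ N_is_norm) mulmx_suml.
rewrite ComplexField.Normc.normcV normcMn ComplexField.Normc.normc1.
rewrite ler_pdivrMl ?ltr0n //; apply: le_trans (norm_sum_le N_is_norm _) _.
under eq_bigr => k _ do rewrite -scalemxAl (normZ N_is_norm) ComplexField.Normc.normcV normcX q1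
  expr1n invr1 mul1r (isometry_mxX k isou).2.
by rewrite sumr_const card_ord mulr_natl.
Qed.

Variables (x z g : 'M[R[i]]_n.+1) (M : nat) (d : R).
Hypotheses (M_gt0 : (0 < M)%N) (xM : x ^+ M = 1) (zM : z ^+ M = 1).
Hypotheses (isox : isometry_mx N x) (isoz : isometry_mx N z).
Hypotheses (xz : GRing.comm x z) (xg : x * g = z * g * x).
Hypotheses (d_lt1 : d < 1) (norm_one_sub_g : forall v, N ((1%:M - g) *m v) <= d * N v).

Lemma twisted_eigencomponent_eq0 p q (v : 'cV[R[i]]_n.+1) :
  p ^+ M = 1 -> q ^+ M = 1 -> q != 1 ->
  eigenproj M z q *m (eigenproj M x p *m v) = 0.
Proof.
move=> pM qM q_neq1; rewrite mulmxA_mul.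
have eigvec (a A : 'M_n.+1) c : a * A = c *: A -> a *m (A *m v) = c *: (A *m v).
  by move=> aA; rewrite mulmxA_mul aA -scalemxAl.
have xu := eigvec _ _ _ (mul_eigenproj_comm M_gt0 xM xz q pM).
have zu : z *m (eigenproj M z q * eigenproj M x p *m v) =
    q *: (eigenproj M z q * eigenproj M x p *m v).
  by apply: eigvec; rewrite mulrA (mul_eigenproj M_gt0 zM qM) -scalerAl.
move: (_ *m v) xu zu => u xu zu.
have u_eq : u = eigenproj M z q *m (eigenproj M x p *m ((1%:M - g) *m u)).
  rewrite mulmxBl mul1mx !mulmxBr (eigenproj_twist_eq0 M_gt0 xM xz xg pM qM q_neq1 xu) subr0.
  rewrite (eigenproj_eigenvector M_gt0 (unity_root_neq0 M_gt0 pM) xu).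
  by rewrite (eigenproj_eigenvector M_gt0 (unity_root_neq0 M_gt0 qM) zu).
have Nu_le : N u <= d * N u.
  rewrite {1}u_eq; apply: le_trans (norm_one_sub_g u).
  apply: le_trans (norm_eigenproj_le _ M_gt0 isoz _) _; first exact: normc_unity_root qM.
  by apply: norm_eigenproj_le M_gt0 isox _; apply: normc_unity_root pM.
apply: (norm_le0 N_is_norm); have d1_gt0 : 0 < 1 - d by rewrite subr_gt0.
by rewrite -(pmulr_rle0 _ d1_gt0) mulrBl mul1r subr_le0.
Qed.

Lemma twisted_commutator_eq1 : z = 1.
Proof.
have [w prim_w] := prim_root_exists R[i] M_gt0.
have Pv_eq0 (l : 'I_M) (v : 'cV_n.+1) : l != 0 :> nat -> eigenproj M z (w ^+ l) *m v = 0.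
  move=> l_neq0; rewrite -[v]mul1mx idmxE -(sum_eigenproj x M_gt0 prim_w).
  rewrite mulmx_suml mulmx_sumr big1 // => j _.
  apply: twisted_eigencomponent_eq0; rewrite ?prim_root_exprX_order //.
  by rewrite (prim_root_expr_eq1 _ prim_w).
apply: mulmx_cV_ext => v; rewrite -idmxE mul1mx.
have v_eq : v = eigenproj M z 1 *m v.
  rewrite -{1}[v]mul1mx idmxE -(sum_eigenproj z M_gt0 prim_w) mulmx_suml.
  rewrite (bigD1 (Ordinal M_gt0)) //= big1 ?addr0 ?expr0 // => l l_neq0.
  by apply: Pv_eq0; apply: contra l_neq0 => /eqP l_eq0; apply/eqP/val_inj.
by rewrite v_eq mulmxA_mul mul_eigenproj ?expr1n // -scalemxAl scale1r.
Qed.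

End TwistedCommutation.

Lemma commute_of_commute_commutator (R : realType) n (N : 'cV[R[i]]_n.+1 -> R)
    (x g : 'M[R[i]]_n.+1) Mx Mc :
  is_norm N -> isometry_mx N x -> isometry_mx N g -> defect N g < 1 ->
  (0 < Mx)%N -> x ^+ Mx = 1 -> (0 < Mc)%N -> (x *m g *m invmx x *m invmx g) ^+ Mc = 1 ->
  GRing.comm x (x *m g *m invmx x *m invmx g) -> x *m g = g *m x.
Proof.
move=> N_is_norm isox isog dg_lt1 Mx_gt0 xMx Mc_gt0 cMc xc.
have cgx : (x *m g *m invmx x *m invmx g) * g * x = x * g.
  exact: commutator_mulK isox.1 isog.1.
have isoc : isometry_mx N (x *m g *m invmx x *m invmx g).
  by do 2![apply: isometry_mxM; last exact: isometry_mxV]; apply: isometry_mxM.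
move: (x *m g *m invmx x *m invmx g) cgx isoc cMc xc => c cgx isoc cMc xc.
have M_gt0 : (0 < Mx * Mc)%N by rewrite muln_gt0 Mx_gt0.
have xM : x ^+ (Mx * Mc) = 1 by rewrite exprM xMx expr1n.
have cM : c ^+ (Mx * Mc) = 1 by rewrite mulnC exprM cMc expr1n.
have c1 := twisted_commutator_eq1 N_is_norm M_gt0 xM cM isox isoc xc (esym cgx) dg_lt1
  (norm_one_sub_le_defect N_is_norm isog).
by rewrite c1 mul1r in cgx.
Qed.

Theorem mainTheorem5 (R : realType) (n : nat) (N : 'cV[R[i]]_n.+1 -> R)
  (x y : 'M[R[i]]_n.+1) :
  is_norm N ->
  isometry_mx N x -> isometry_mx N y ->
  finite_set (gen2_set x y) ->
  opnorm N (1%:M - x) < 1 / 2 ->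
  opnorm N (1%:M - y) < 1 / 2 ->
  x *m y = y *m x.
Proof.
move=> N_is_norm isox isoy fin_gen dx dy.
pose P g := defect N g < 1 / 2 -> x *m g = g *m x.
suff comm_x : forall g, gen2_set x y g -> P g by exact: comm_x (gen2_y x y) dy.
apply: (finite_set_ltr_ind (f := fun g => defect N g) fin_gen) => g gen_g IH dg.
have isog := gen2_isometry isox isoy gen_g.
have [dg0|dg_neq0] := eqVneq (defect N g) 0.
  by rewrite (defect_eq0 N_is_norm isog dg0) mulmx1 mul1mx.
have gen_x := gen2_x x y.
have gen_c := gen2_mul (gen2_mul (gen2_mul gen_x gen_g) (gen2_inv gen_x)) (gen2_inv gen_g).
have dc_lt := defect_commutator_lt N_is_norm isox isog dx dg_neq0.
have [Mx Mx_gt0 xMx] := gen2_order fin_gen gen_x isox.1.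
have [Mc Mc_gt0 cMc] := gen2_order fin_gen gen_c (gen2_isometry isox isoy gen_c).1.
have dg_lt1 : defect N g < 1 by apply: lt_trans dg _; lra.
apply: (commute_of_commute_commutator N_is_norm isox isog dg_lt1 Mx_gt0 xMx Mc_gt0 cMc).
by apply: IH => //; apply: lt_trans dc_lt dg.
Qed.
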